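(* Let $X:\Omega\to\mathbb{R}^3$ be a timelike minimal surface in $\mathbb{L}^3$ which is a smooth graph over a timelike plane $P$ (through the origin). Let $\{b_2,b_3\}$ be a basis of $P$ orthonormal with respect to $\langle\cdot,\cdot\rangle$, with $b_2$ spacelike and $b_3$ timelike, and let $b_1=N$ be the unit spacelike normal of $P$, so that $\{b_1,b_2,b_3\}$ is an orthonormal basis of $\mathbb{L}^3$. Writing the surface, via the inverse of the (diffeomorphic) orthogonal projection onto $P$, as $X(x_2,x_3)$ over points $x_2b_2+x_3b_3$ of $P$, define $\psi(x_2,x_3)=\langle X(x_2,x_3),N\rangle$, so that $X(x_2,x_3)=\psi(x_2,x_3)N+x_2b_2+x_3b_3$. Then $\psi$ satisfies the Born-Infeld equation in the variables $x_2,x_3$, i.e. $\psi$ is a Born-Infeld soliton.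
   Context: $\mathbb{L}^3$ denotes $\mathbb{R}^3$ with the metric $\langle\cdot,\cdot\rangle$ given by $ds^2=dx^2+dy^2-dz^2$. A surface is timelike if its induced metric is Lorentzian, minimal if its mean curvature vanishes. A function $\psi$ on an open set of the $(u,v)$-plane is a Born-Infeld soliton (in the variables $u,v$) if $(1-\psi_v^2)\psi_{uu}+2\psi_u\psi_v\psi_{uv}-(1+\psi_u^2)\psi_{vv}=0$. *)

From Stdlib Require Import Reals List.
From Coquelicot Require Import Coquelicot.
Open Scope R_scope.

Definition vec := (R * R * R)%type.
Definition vx (a : vec) : R := fst (fst a).
Definition vy (a : vec) : R := snd (fst a).
Definition vz (a : vec) : R := snd a.
Definition mkvec (x y z : R) : vec := ((x, y), z).
Definition vadd (a b : vec) : vec := mkvec (vx a + vx b) (vy a + vy b) (vz a + vz b).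
Definition vscal (c : R) (a : vec) : vec := mkvec (c * vx a) (c * vy a) (c * vz a).

Definition ldot (a b : vec) : R := vx a * vx b + vy a * vy b - vz a * vz b.

(* Lorentzian cross product: ldot (lcross a b) c = det(a, b, c). *)
Definition lcross (a b : vec) : vec :=
  mkvec (vy a * vz b - vz a * vy b)
        (vz a * vx b - vx a * vz b)
        (- (vx a * vy b - vy a * vx b)).

Definition pd1 (f : R -> R -> R) (u v : R) : R := Derive (fun t => f t v) u.
Definition pd2 (f : R -> R -> R) (u v : R) : R := Derive (fun t => f u t) v.

Fixpoint iter_pd (l : list bool) (f : R -> R -> R) : R -> R -> R :=
  match l with
  | nil => f
  | b :: l' => (if b then pd1 else pd2) (iter_pd l' f)
  end.

Definition smooth_on (U : R * R -> Prop) (f : R -> R -> R) : Prop :=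
  forall (l : list bool) (u v : R), U (u, v) ->
    continuous (fun p : R * R => iter_pd l f (fst p) (snd p)) (u, v) /\
    ex_derive (fun t => iter_pd l f t v) u /\
    ex_derive (fun t => iter_pd l f u t) v.

Definition vpd1 (X : R -> R -> vec) (u v : R) : vec :=
  mkvec (pd1 (fun a b => vx (X a b)) u v) (pd1 (fun a b => vy (X a b)) u v)
        (pd1 (fun a b => vz (X a b)) u v).
Definition vpd2 (X : R -> R -> vec) (u v : R) : vec :=
  mkvec (pd2 (fun a b => vx (X a b)) u v) (pd2 (fun a b => vy (X a b)) u v)
        (pd2 (fun a b => vz (X a b)) u v).

Definition fE X u v := ldot (vpd1 X u v) (vpd1 X u v).
Definition fF X u v := ldot (vpd1 X u v) (vpd2 X u v).
Definition fG X u v := ldot (vpd2 X u v) (vpd2 X u v).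

Definition timelike_at (X : R -> R -> vec) (u v : R) : Prop :=
  fE X u v * fG X u v - fF X u v ^ 2 < 0.

(* Unit normal (spacelike for a timelike surface). *)
Definition unit_normal (X : R -> R -> vec) (u v : R) : vec :=
  let n0 := lcross (vpd1 X u v) (vpd2 X u v) in
  vscal (/ sqrt (ldot n0 n0)) n0.

Definition sL X u v := ldot (vpd1 (vpd1 X) u v) (unit_normal X u v).
Definition sM X u v := ldot (vpd2 (vpd1 X) u v) (unit_normal X u v).
Definition sN X u v := ldot (vpd2 (vpd2 X) u v) (unit_normal X u v).

Definition mean_curvature (X : R -> R -> vec) (u v : R) : R :=
  (fE X u v * sN X u v - 2 * fF X u v * sM X u v + fG X u v * sL X u v)
  / (2 * (fE X u v * fG X u v - fF X u v ^ 2)).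

Definition born_infeld_at (psi : R -> R -> R) (u v : R) : Prop :=
  (1 - pd2 psi u v ^ 2) * pd1 (pd1 psi) u v
  + 2 * pd1 psi u v * pd2 psi u v * pd2 (pd1 psi) u v
  - (1 + pd1 psi u v ^ 2) * pd2 (pd2 psi) u v = 0.

(* Over the plane spanned by b2, b3 the surface reads X = psi b1 + x2 b2 + x3 b3, so
   X_2 = psi_2 b1 + b2, X_3 = psi_3 b1 + b3 and all second derivatives of X are
   multiples of b1.  Hence E = 1 + psi_2^2, F = psi_2 psi_3, G = psi_3^2 - 1, and the
   second fundamental form is psi_ij times det(b1, b2, b3) / sqrt(1 + psi_2^2 - psi_3^2),
   where det(b1, b2, b3) = +-1 because the frame is orthonormal.  The numerator
   E N - 2 F M + G L of the mean curvature is then a nonzero multiple of the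
   Born-Infeld operator applied to psi, so H = 0 is exactly the Born-Infeld equation. *)
From Stdlib Require Import Reals Lra Psatz List.
From Coquelicot Require Import Coquelicot.
Open Scope R_scope.

Definition vzero : vec := mkvec 0 0 0.

Lemma vec_ext (a b : vec) : vx a = vx b -> vy a = vy b -> vz a = vz b -> a = b.
Proof.
destruct a as [[ax ay] az], b as [[bx by'] bz]; unfold vx, vy, vz; simpl.
intros -> -> ->; reflexivity.
Qed.

Lemma vadd_vzero_r (a : vec) : vadd a vzero = a.
Proof. apply vec_ext; unfold vadd, vzero, mkvec, vx, vy, vz; simpl; ring. Qed.

Lemma ldot_vscal (k c : R) (a b : vec) : ldot (vscal k a) (vscal c b) = k * c * ldot a b.
Proof. unfold ldot, vscal, vx, vy, vz, mkvec; simpl; ring. Qed.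

Lemma ldot_vadd_vscal (p q : R) (a b c : vec) :
  ldot (vadd (vscal p a) b) (vadd (vscal q a) c) =
  p * q * ldot a a + p * ldot a c + q * ldot a b + ldot b c.
Proof. unfold ldot, vadd, vscal, vx, vy, vz, mkvec; simpl; ring. Qed.

Lemma ldot_lcross_self (a b : vec) :
  ldot (lcross a b) (lcross a b) = - (ldot a a * ldot b b - ldot a b ^ 2).
Proof. unfold ldot, lcross, vx, vy, vz, mkvec; simpl; ring. Qed.

Lemma ldot_lcross_shift (a b c : vec) (p q : R) :
  ldot a (lcross (vadd (vscal p a) b) (vadd (vscal q a) c)) = ldot a (lcross b c).
Proof. unfold ldot, lcross, vadd, vscal, vx, vy, vz, mkvec; simpl; ring. Qed.

Lemma gram_det_ldot_lcross (a b c : vec) :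
  ldot a a * (ldot b b * ldot c c - ldot b c ^ 2)
  - ldot a b * (ldot a b * ldot c c - ldot b c * ldot a c)
  + ldot a c * (ldot a b * ldot b c - ldot b b * ldot a c)
  = - ldot a (lcross b c) ^ 2.
Proof. unfold ldot, lcross, vx, vy, vz, mkvec; simpl; ring. Qed.

Section PartialDerivatives.

Variable U : R * R -> Prop.
Hypothesis HU : open U.

Lemma locally_slice1 (u v : R) : U (u, v) -> locally u (fun t => U (t, v)).
Proof.
intros Huv; destruct (HU _ Huv) as [eps Heps].
exists eps; intros t Ht; apply Heps; split; [exact Ht | apply ball_center].
Qed.

Lemma locally_slice2 (u v : R) : U (u, v) -> locally v (fun t => U (u, t)).
Proof.
intros Huv; destruct (HU _ Huv) as [eps Heps].
exists eps; intros t Ht; apply Heps; split; [apply ball_center | exact Ht].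
Qed.

Lemma pd1_ext_on (f g : R -> R -> R) (u v : R) :
  (forall a b, U (a, b) -> f a b = g a b) -> U (u, v) -> pd1 f u v = pd1 g u v.
Proof.
intros Hfg Huv; unfold pd1; apply Derive_ext_loc.
eapply filter_imp; [|exact (locally_slice1 u v Huv)]; intros t Ht; exact (Hfg _ _ Ht).
Qed.

Lemma pd2_ext_on (f g : R -> R -> R) (u v : R) :
  (forall a b, U (a, b) -> f a b = g a b) -> U (u, v) -> pd2 f u v = pd2 g u v.
Proof.
intros Hfg Huv; unfold pd2; apply Derive_ext_loc.
eapply filter_imp; [|exact (locally_slice2 u v Huv)]; intros t Ht; exact (Hfg _ _ Ht).
Qed.

End PartialDerivatives.

Lemma pd1_affine (h : R -> R -> R) (al be ga de u v : R) :
  ex_derive (fun t => h t v) u ->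
  pd1 (fun a b => h a b * al + a * be + b * ga + de) u v = pd1 h u v * al + be.
Proof. intros Hh; unfold pd1; apply is_derive_unique; auto_derive; [exact Hh | ring]. Qed.

Lemma pd2_affine (h : R -> R -> R) (al be ga de u v : R) :
  ex_derive (fun t => h u t) v ->
  pd2 (fun a b => h a b * al + a * be + b * ga + de) u v = pd2 h u v * al + ga.
Proof. intros Hh; unfold pd2; apply is_derive_unique; auto_derive; [exact Hh | ring]. Qed.

Lemma vpd_affine_on (U : R * R -> Prop) (Y : R -> R -> vec) (h : R -> R -> R)
  (n e2 e3 e0 : vec) (u v : R) :
  open U -> U (u, v) ->
  (forall a b, U (a, b) ->
     Y a b = vadd (vadd (vscal (h a b) n) (vadd (vscal a e2) (vscal b e3))) e0) ->
  ex_derive (fun t => h t v) u -> ex_derive (fun t => h u t) v ->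
  vpd1 Y u v = vadd (vscal (pd1 h u v) n) e2 /\
  vpd2 Y u v = vadd (vscal (pd2 h u v) n) e3.
Proof.
intros HU Huv HY Hh1 Hh2.
assert (Hcomp : forall proj : vec -> R,
  (forall a b, proj (vadd a b) = proj a + proj b) ->
  (forall c a, proj (vscal c a) = c * proj a) ->
  pd1 (fun a b => proj (Y a b)) u v = pd1 h u v * proj n + proj e2 /\
  pd2 (fun a b => proj (Y a b)) u v = pd2 h u v * proj n + proj e3).
{ intros proj Hadd Hscal.
  set (g := fun a b => h a b * proj n + a * proj e2 + b * proj e3 + proj e0).
  assert (Hg : forall a b, U (a, b) -> proj (Y a b) = g a b).
  { intros a b Hab; unfold g; rewrite HY, !Hadd, !Hscal by exact Hab; ring. }
  rewrite (pd1_ext_on U HU _ g), (pd2_ext_on U HU _ g) by assumption.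
  split; [exact (pd1_affine h _ _ _ _ u v Hh1) | exact (pd2_affine h _ _ _ _ u v Hh2)]. }
destruct (Hcomp vx (fun _ _ => eq_refl) (fun _ _ => eq_refl)) as [X1 X2].
destruct (Hcomp vy (fun _ _ => eq_refl) (fun _ _ => eq_refl)) as [Y1 Y2].
destruct (Hcomp vz (fun _ _ => eq_refl) (fun _ _ => eq_refl)) as [Z1 Z2].
unfold vpd1, vpd2; rewrite X1, X2, Y1, Y2, Z1, Z2; split; reflexivity.
Qed.

Section GraphDerivatives.

Variables (b1 b2 b3 : vec) (U : R * R -> Prop) (X : R -> R -> vec) (psi : R -> R -> R).
Hypothesis HU : open U.
Hypothesis HX : forall x2 x3, U (x2, x3) ->
  X x2 x3 = vadd (vscal (psi x2 x3) b1) (vadd (vscal x2 b2) (vscal x3 b3)).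
Hypothesis Hsmooth : smooth_on U psi.

Lemma graph_vpd (u v : R) : U (u, v) ->
  vpd1 X u v = vadd (vscal (pd1 psi u v) b1) b2 /\
  vpd2 X u v = vadd (vscal (pd2 psi u v) b1) b3.
Proof.
intros Huv; destruct (Hsmooth nil u v Huv) as [_ [H1 H2]].
apply (vpd_affine_on U X psi b1 b2 b3 vzero); auto.
intros a b Hab; rewrite HX, vadd_vzero_r by exact Hab; reflexivity.
Qed.

Lemma graph_vpd2 (u v : R) : U (u, v) ->
  vpd1 (vpd1 X) u v = vscal (pd1 (pd1 psi) u v) b1 /\
  vpd2 (vpd1 X) u v = vscal (pd2 (pd1 psi) u v) b1 /\
  vpd2 (vpd2 X) u v = vscal (pd2 (pd2 psi) u v) b1.
Proof.
intros Huv.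
destruct (Hsmooth (true :: nil) u v Huv) as [_ [P1 P2]].
destruct (Hsmooth (false :: nil) u v Huv) as [_ [Q1 Q2]].
assert (Hzero : forall (Y : R -> R -> vec) (h : R -> R -> R) (e0 : vec),
  (forall a b, U (a, b) -> Y a b = vadd (vscal (h a b) b1) e0) ->
  forall a b, U (a, b) ->
    Y a b = vadd (vadd (vscal (h a b) b1) (vadd (vscal a vzero) (vscal b vzero))) e0).
{ intros Y h e0 HY a b Hab; rewrite HY by exact Hab; f_equal.
  apply vec_ext; unfold vadd, vscal, vzero, mkvec, vx, vy, vz; simpl; ring. }
destruct (vpd_affine_on U (vpd1 X) (pd1 psi) b1 vzero vzero b2 u v) as [H11 H12];
  auto.
{ apply Hzero; intros a b Hab; exact (proj1 (graph_vpd a b Hab)). }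
destruct (vpd_affine_on U (vpd2 X) (pd2 psi) b1 vzero vzero b3 u v) as [_ H22];
  auto.
{ apply Hzero; intros a b Hab; exact (proj2 (graph_vpd a b Hab)). }
rewrite H11, H12, H22, !vadd_vzero_r; repeat split.
Qed.

End GraphDerivatives.

Section OrthonormalFrame.

Variables b1 b2 b3 : vec.
Hypotheses (Hb1 : ldot b1 b1 = 1) (Hb2 : ldot b2 b2 = 1) (Hb3 : ldot b3 b3 = -1)
  (Hb12 : ldot b1 b2 = 0) (Hb13 : ldot b1 b3 = 0) (Hb23 : ldot b2 b3 = 0).

Lemma frame_det_sqr : ldot b1 (lcross b2 b3) ^ 2 = 1.
Proof.
pose proof (gram_det_ldot_lcross b1 b2 b3) as Hgram.
rewrite Hb1, Hb2, Hb3, Hb12, Hb13, Hb23 in Hgram; lra.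
Qed.

Variables (X : R -> R -> vec) (u v p q : R).
Hypotheses (Hu : vpd1 X u v = vadd (vscal p b1) b2)
  (Hv : vpd2 X u v = vadd (vscal q b1) b3).

Lemma graph_fE : fE X u v = 1 + p ^ 2.
Proof. unfold fE; rewrite Hu, ldot_vadd_vscal, Hb1, Hb2, Hb12; ring. Qed.

Lemma graph_fF : fF X u v = p * q.
Proof. unfold fF; rewrite Hu, Hv, ldot_vadd_vscal, Hb1, Hb12, Hb13, Hb23; ring. Qed.

Lemma graph_fG : fG X u v = q ^ 2 - 1.
Proof. unfold fG; rewrite Hv, ldot_vadd_vscal, Hb1, Hb3, Hb13; ring. Qed.

Lemma graph_metric_det : fE X u v * fG X u v - fF X u v ^ 2 = q ^ 2 - p ^ 2 - 1.
Proof. rewrite graph_fE, graph_fF, graph_fG; ring. Qed.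

Lemma graph_mean_curvature (a b d : R) :
  vpd1 (vpd1 X) u v = vscal a b1 -> vpd2 (vpd1 X) u v = vscal b b1 ->
  vpd2 (vpd2 X) u v = vscal d b1 -> 0 < 1 + p ^ 2 - q ^ 2 ->
  mean_curvature X u v =
  ldot b1 (lcross b2 b3) * ((1 - q ^ 2) * a + 2 * p * q * b - (1 + p ^ 2) * d)
  / (2 * (1 + p ^ 2 - q ^ 2) * sqrt (1 + p ^ 2 - q ^ 2)).
Proof.
intros Huu Huv Hvv Hw.
unfold mean_curvature, sL, sM, sN, unit_normal; cbv zeta.
rewrite ldot_lcross_self; fold (fE X u v) (fF X u v) (fG X u v).
rewrite graph_metric_det, graph_fE, graph_fF, graph_fG, Huu, Huv, Hvv, Hu, Hv,
  !ldot_vscal, !ldot_lcross_shift.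
replace (- (q ^ 2 - p ^ 2 - 1)) with (1 + p ^ 2 - q ^ 2) by ring.
assert (Hs : 0 < sqrt (1 + p ^ 2 - q ^ 2)) by (apply sqrt_lt_R0; exact Hw).
field; lra.
Qed.

End OrthonormalFrame.

Definition born_infeld_operator (psi : R -> R -> R) (u v : R) : R :=
  (1 - pd2 psi u v ^ 2) * pd1 (pd1 psi) u v
  + 2 * pd1 psi u v * pd2 psi u v * pd2 (pd1 psi) u v
  - (1 + pd1 psi u v ^ 2) * pd2 (pd2 psi) u v.

Theorem lemma3p1
  (b1 b2 b3 : vec)
  (Hb1 : ldot b1 b1 = 1) (Hb2 : ldot b2 b2 = 1) (Hb3 : ldot b3 b3 = -1)
  (Hb12 : ldot b1 b2 = 0) (Hb13 : ldot b1 b3 = 0) (Hb23 : ldot b2 b3 = 0)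
  (U : R * R -> Prop) (HU : open U)
  (X : R -> R -> vec) (psi : R -> R -> R)
  (Hpsi_def : forall x2 x3, U (x2, x3) -> psi x2 x3 = ldot (X x2 x3) b1)
  (HX : forall x2 x3, U (x2, x3) ->
        X x2 x3 = vadd (vscal (psi x2 x3) b1) (vadd (vscal x2 b2) (vscal x3 b3)))
  (Hsmooth : smooth_on U psi)
  (Htimelike : forall x2 x3, U (x2, x3) -> timelike_at X x2 x3)
  (Hminimal : forall x2 x3, U (x2, x3) -> mean_curvature X x2 x3 = 0) :
  forall x2 x3, U (x2, x3) -> born_infeld_at psi x2 x3.
Proof.
intros u v Huv.
destruct (graph_vpd b1 b2 b3 U X psi HU HX Hsmooth u v Huv) as [Hu Hv].
destruct (graph_vpd2 b1 b2 b3 U X psi HU HX Hsmooth u v Huv) as [Huu [Hu_v Hvv]].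
assert (Hw : 0 < 1 + pd1 psi u v ^ 2 - pd2 psi u v ^ 2).
{ pose proof (Htimelike u v Huv) as Ht; unfold timelike_at in Ht.
  rewrite (graph_metric_det b1 b2 b3 Hb1 Hb2 Hb3 Hb12 Hb13 Hb23 X u v _ _ Hu Hv) in Ht.
  lra. }
pose proof (Hminimal u v Huv) as Hmin.
rewrite (graph_mean_curvature b1 b2 b3 Hb1 Hb2 Hb3 Hb12 Hb13 Hb23 X u v _ _ Hu Hv
           _ _ _ Huu Hu_v Hvv Hw) in Hmin.
fold (born_infeld_operator psi u v) in Hmin.
assert (Hdet : ldot b1 (lcross b2 b3) <> 0).
{ pose proof (frame_det_sqr b1 b2 b3 Hb1 Hb2 Hb3 Hb12 Hb13 Hb23); nra. }
assert (Hs : 0 < sqrt (1 + pd1 psi u v ^ 2 - pd2 psi u v ^ 2)) by (apply sqrt_lt_R0; lra).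
unfold Rdiv in Hmin; apply Rmult_integral in Hmin as [Hmin | Hmin].
- apply Rmult_integral in Hmin as [Hmin | Hmin]; [contradiction | exact Hmin].
- exfalso; revert Hmin; apply Rinv_neq_0_compat; nra.
Qed.
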